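(* Let $\hat P$ be a partial $r$-differential poset of rank $n$, and let $P$ be the $r$-differential poset obtained from $\hat P$ by iterating Wagner's construction. Write $p_m$ for the rank sizes (which agree for $\hat P$ and $P$ in ranks $\le n$). (i) If $\Delta p_m\ge \Delta p_{m-j-\delta_{r,1}}$ holds for all $1\le m\le n$ and $1\le j\le m$, then $\Delta p_m\ge \Delta p_{m-j-\delta_{r,1}}$ holds in $P$ for all $m\ge1$ and $1\le j\le m$. (ii) If the cokernel of the up map $U_j:\mathbb{Z}^{p_j}\to\mathbb{Z}^{p_{j+1}}$ of $\hat P$ is free abelian for all $0\le j\le n-1$, then the cokernel of $U_m$ in $P$ is free abelian for all $m\ge 0$.
   Context: For a graded poset $Q$ with rank sets $Q_m$, the up map $U_m:\mathbb{Z}^{Q_m}\to\mathbb{Z}^{Q_{m+1}}$ sends each basis element to the sum of the elements covering it, and the down map $D_m:\mathbb{Z}^{Q_m}\to\mathbb{Z}^{Q_{m-1}}$ sends it to the sum of the elements it covers; $DU_m=D_{m+1}U_m$, $UD_m=U_{m-1}D_m$. A partial $r$-differential poset of rank $n$ is a finite graded poset of rank $n$ with a minimum element such that $DU_i-UD_i=rI$ for $i=0,1,\dots,n-1$. Wagner's construction: given such $Q$ of rank $n$, form $Q^+$ of rank $n+1$ by adding, for each $v\in Q_{n-1}$, a new element $v^*$ of rank $n+1$ covering exactly those $x\in Q_n$ that cover $v$, and then adjoining above each $x\in Q_n$ exactly $r$ new elements covering only $x$. Iterating $Q\mapsto Q^+$ indefinitely produces an $r$-differential poset (a graded poset with minimum,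 finite intervals and ranks, in which an element covering $m$ elements is covered by $m+r$, and two distinct elements covering exactly $m$ common elements are covered by exactly $m$ common elements). Here $p_m$ is the number of rank-$m$ elements, $p_k=0$ for $k<0$, $\Delta p_m=p_m-p_{m-1}$, $\delta_{r,1}$ is the Kronecker delta. *)

From HB Require Import structures.
From mathcomp Require Import all_boot all_order all_algebra.
Set Implicit Arguments. Unset Strict Implicit. Unset Printing Implicit Defensive.
Import Order.TTheory GRing.Theory Num.Theory.
Local Open Scope ring_scope.

(* A finite graded poset is encoded by its Hasse diagram:
   the elements of rank m are the naturals i < hsize m, and
   hcov m i j (i < hsize m, j < hsize m.+1) says that the element j of
   rank m+1 covers the element i of rank m.  (In a graded poset every
   cover relation is between consecutive ranks and the order is the
   reflexive-transitive closure of the covers.) *)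
Record hasse := Hasse { hsize : nat -> nat ; hcov : nat -> nat -> nat -> bool }.

Definition graded_rank (n : nat) (Q : hasse) : Prop :=
  [/\ hsize Q 0 = 1%N,
      (0 < hsize Q n)%N,
      (forall m, (n < m)%N -> hsize Q m = 0%N) &
      (forall m i, (i < hsize Q m.+1)%N ->
         exists2 j, (j < hsize Q m)%N & hcov Q m j i)].

Definition upmx (Q : hasse) (m : nat) : 'M[int]_(hsize Q m.+1, hsize Q m) :=
  \matrix_(i < hsize Q m.+1, j < hsize Q m) (nat_of_bool (hcov Q m j i))%:Z.

Definition downmx (Q : hasse) (m : nat) : 'M[int]_(hsize Q m, hsize Q m.+1) :=
  (upmx Q m)^T.

Definition DUmx (Q : hasse) (m : nat) : 'M[int]_(hsize Q m) :=
  downmx Q m *m upmx Q m.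

(* UD_m = U_{m-1} D_m, and UD_0 = 0 since Q_{-1} is empty *)
Definition UDmx (Q : hasse) (m : nat) : 'M[int]_(hsize Q m) :=
  match m return 'M[int]_(hsize Q m) with
  | 0 => 0
  | k.+1 => upmx Q k *m downmx Q k
  end.

Definition partial_diff (r n : nat) (Q : hasse) : Prop :=
  graded_rank n Q /\
  forall i, (i < n)%N -> DUmx Q i - UDmx Q i = (r%:Z)%:M.

Definition prev_size (Q : hasse) (n : nat) : nat :=
  if n is k.+1 then hsize Q k else 0%N.

Definition wagner (r n : nat) (Q : hasse) : hasse :=
  Hasse
    (fun m => if (m <= n)%N then hsize Q m
              else if m == n.+1 then (prev_size Q n + r * hsize Q n)%N else 0%N)
    (fun m i j =>
       if (m < n)%N then hcov Q m i j
       else if m == n then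
         (* rank-(n+1) elements: first v* for v in Q_{n-1},
            then r new elements above each x in Q_n (x*r + t, t < r) *)
         (if (j < prev_size Q n)%N then hcov Q n.-1 j i
          else ((j - prev_size Q n) %/ r == i)%N)
       else false).

Fixpoint wagner_iter (r n : nat) (Q : hasse) (k : nat) : hasse :=
  if k is k'.+1 then wagner r (n + k') (wagner_iter r n Q k') else Q.

(* The r-differential poset obtained by iterating indefinitely: ranks <= m
   of the limit are already fixed in the m-th iterate, and covers between
   ranks m and m+1 in the (m+1)-th iterate. *)
Definition wagner_limit (r n : nat) (Q : hasse) : hasse :=
  Hasse (fun m => hsize (wagner_iter r n Q m) m)
        (fun m => hcov (wagner_iter r n Q m.+1) m).

Definition psize (Q : hasse) (k : int) : int :=
  if k is Posz m then (hsize Q m)%:Z else 0.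

Definition dp (Q : hasse) (k : int) : int := psize Q k - psize Q (k - 1).

Definition kdelta (r : nat) : int := if r == 1%N then 1 else 0.

(* The cokernel of A : Z^a -> Z^b is free abelian: it is isomorphic to Z^k
   for some k, i.e. there is a surjective Z-linear map phi : Z^b -> Z^k whose
   kernel is exactly the image of A. *)
Definition coker_free (a b : nat) (A : 'M[int]_(b, a)) : Prop :=
  exists k (phi : 'M[int]_(k, b)),
    (forall y : 'cV[int]_k, exists x : 'cV[int]_b, phi *m x = y) /\
    (forall x : 'cV[int]_b, phi *m x = 0 <-> exists z : 'cV[int]_a, x = A *m z).

(* Above rank n, Wagner's construction gives p_{m+1} = p_{m-1} + r p_m, that is
   Δp_{m+1} = p_{m-1} + (r-1) p_m.  For r >= 2 this is at least p_m >= Δp_m, so Δp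
   is nondecreasing.  For r = 1 it equals p_{m-1}; then Δp >= 0, so p is
   nondecreasing and p_{m-1} bounds every earlier Δp.  For the cokernels: above
   rank n every x of rank m is covered by r new elements covering only x, so some
   rows of U_m form an identity matrix, and the cokernel of such a matrix is free
   on the remaining coordinates. *)

From mathcomp Require Import all_boot all_order all_algebra zify.
Import Order.TTheory GRing.Theory Num.Theory.
Local Open Scope ring_scope.

Section CokernelOfUnitRows.

Variables (a b : nat) (M : 'M[int]_(b, a)) (s : 'I_a -> 'I_b).
Hypothesis rowsub_M : rowsub s M = 1%:M.

Let C : {set 'I_b} := [set i | i \notin codom s].
Let e : 'I_#|C| -> 'I_b := enum_val (A := C).
Let S : 'M[int]_(a, b) := rowsub s 1%:M.
Let E : 'M[int]_(b, #|C|) := (rowsub e 1%:M)^T.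
(* [Pm] projects along the image of [M] onto the vectors vanishing on the rows
   [codom s]; its rows outside [codom s] form the cokernel map. *)
Let Pm : 'M[int]_b := 1%:M - M *m S.

Let S_mul c (N : 'M[int]_(b, c)) : S *m N = rowsub s N.
Proof. by rewrite mul_rowsub_mx mul1mx. Qed.

Let S_M : S *m M = 1%:M. Proof. by rewrite S_mul. Qed.

Let Pm_M : Pm *m M = 0.
Proof. by rewrite mulmxBl mul1mx -mulmxA S_M mulmx1 subrr. Qed.

Let S_Pm : S *m Pm = 0.
Proof. by rewrite mulmxBr mulmx1 mulmxA S_M mul1mx subrr. Qed.

Let S_E : S *m E = 0.
Proof.
apply/matrixP=> j c; rewrite S_mul !mxE.
have := enum_valP c; rewrite inE => /negP e_out.
by case: eqP => // ec; case: e_out; rewrite -/(e c) ec codom_f.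
Qed.

Let rowsub_E : rowsub e E = 1%:M.
Proof. by apply/matrixP=> c c'; rewrite !mxE (inj_eq enum_val_inj) eq_sym. Qed.

Let col_eq0 (v : 'cV[int]_b) : rowsub s v = 0 -> rowsub e v = 0 -> v = 0.
Proof.
move=> /matrixP vs0 /matrixP ve0; apply/matrixP=> i k.
have [iC | ] := boolP (i \in C).
  by have := ve0 (enum_rank_in iC i) k; rewrite !mxE /e enum_rankK_in.
by rewrite inE negbK => /codomP [j ->]; have := vs0 j k; rewrite !mxE.
Qed.

Lemma coker_free_rowsub1 : coker_free M.
Proof.
exists #|C|, (rowsub e Pm); split=> [y | x].
  exists (E *m y); rewrite mul_rowsub_mx mulmxA mulmxBl mul1mx -mulmxA S_E.
  by rewrite mulmx0 subr0 -mul_rowsub_mx rowsub_E mul1mx.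
split=> [phi_x0 | [z ->]]; last by rewrite mul_rowsub_mx mulmxA Pm_M mul0mx linear0.
exists (S *m x); apply/eqP; rewrite mulmxA -subr_eq0 -[x in x - _]mul1mx.
rewrite -mulmxBl; apply/eqP/col_eq0; last by rewrite -mul_rowsub_mx phi_x0.
by rewrite -S_mul mulmxA S_Pm mul0mx.
Qed.

End CokernelOfUnitRows.

Definition covmx (a b : nat) (f : nat -> nat -> bool) : 'M[int]_(b, a) :=
  \matrix_(i < b, j < a) (nat_of_bool (f j i))%:Z.

Lemma eq_covmx a b (f g : nat -> nat -> bool) :
  (forall j i, (j < a)%N -> (i < b)%N -> f j i = g j i) -> covmx a b f = covmx a b g.
Proof. by move=> fg; apply/matrixP=> i j; rewrite !mxE fg. Qed.

Lemma coker_free_covmx_wagner a ps r (f : nat -> nat -> bool) : (0 < r)%N ->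
  coker_free (covmx a (ps + r * a)
    (fun j i => if (i < ps)%N then f j i else ((i - ps) %/ r == j)%N)).
Proof.
move=> r_gt0.
have lt_s (j : 'I_a) : (ps + r * j < ps + r * a)%N by rewrite ltn_add2l ltn_pmul2l.
apply: (@coker_free_rowsub1 _ _ _ (fun j => Ordinal (lt_s j))).
apply/matrixP=> j l; rewrite !mxE /= ltnNge leq_addr /= addKn mulKn //.
by rewrite val_eqE; case: (j == l).
Qed.

Section WagnerLimit.

Variables (r n : nat) (Q : hasse).
Local Notation iter := (wagner_iter r n Q).
Local Notation P := (wagner_limit r n Q).

Lemma wagner_iter_hsize_stable k1 k2 m : (k1 <= k2)%N -> (m <= n + k1)%N ->
  hsize (iter k2) m = hsize (iter k1) m.
Proof.
elim: k2 => [|k2 IH]; first by rewrite leqn0 => /eqP ->.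
rewrite leq_eqVlt ltnS => /predU1P [-> // | le_k12] le_m /=.
by rewrite ifT ?IH //; lia.
Qed.

Lemma wagner_iter_hcov_stable k1 k2 m x y : (k1 <= k2)%N -> (m < n + k1)%N ->
  hcov (iter k2) m x y = hcov (iter k1) m x y.
Proof.
elim: k2 => [|k2 IH]; first by rewrite leqn0 => /eqP ->.
rewrite leq_eqVlt ltnS => /predU1P [-> // | le_k12] lt_m /=.
by rewrite ifT ?IH //; lia.
Qed.

Lemma wagner_limit_hsizeE k m : (m <= n + k)%N -> hsize P m = hsize (iter k) m.
Proof.
move=> le_m; rewrite -[hsize P m]/(hsize (iter m) m).
case: (leqP m k) => [le_mk | lt_km].
  by rewrite (wagner_iter_hsize_stable _ _ _ le_mk) //; lia.
by rewrite (wagner_iter_hsize_stable _ _ _ (ltnW lt_km)).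
Qed.

Lemma wagner_limit_prev_sizeE k m : (m <= n + k)%N ->
  prev_size P m = prev_size (iter k) m.
Proof. by case: m => // m le_m; apply: wagner_limit_hsizeE; lia. Qed.

Lemma wagner_limit_hcovE k m x y : (m < n + k)%N -> hcov P m x y = hcov (iter k) m x y.
Proof.
move=> lt_m; rewrite -[hcov P m x y]/(hcov (iter m.+1) m x y).
case: (leqP m.+1 k) => [le_mk | lt_km].
  by rewrite (wagner_iter_hcov_stable _ _ _ _ _ le_mk) //; lia.
by rewrite (wagner_iter_hcov_stable _ _ _ _ _ (ltnW lt_km)).
Qed.

Lemma wagner_limit_hsize_low m : (m <= n)%N -> hsize P m = hsize Q m.
Proof. by move=> le_mn; rewrite (wagner_limit_hsizeE 0) ?addn0. Qed.

Lemma wagner_limit_hcov_low m x y : (m < n)%N -> hcov P m x y = hcov Q m x y.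
Proof. by move=> lt_mn; rewrite (wagner_limit_hcovE 0) ?addn0. Qed.

Lemma wagner_limit_hsizeS m : (n <= m)%N ->
  hsize P m.+1 = (prev_size P m + r * hsize P m)%N.
Proof.
move=> /subnKC Em.
rewrite (wagner_limit_hsizeE (m - n).+1) ?(wagner_limit_hsizeE (m - n) m)
        ?(wagner_limit_prev_sizeE (m - n) m) ?addnS ?Em //=.
by rewrite Em ltnn eqxx.
Qed.

Lemma wagner_limit_hcov_high m x y : (n <= m)%N ->
  hcov P m x y = if (y < prev_size P m)%N then hcov (iter (m - n)) m.-1 y x
                 else ((y - prev_size P m) %/ r == x)%N.
Proof.
move=> /subnKC Em.
rewrite (wagner_limit_hcovE (m - n).+1) ?(wagner_limit_prev_sizeE (m - n) m) ?addnS ?Em //=.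
by rewrite Em ltnn eqxx.
Qed.

End WagnerLimit.

Lemma coker_free_upmx_wagner_limit r n Q m : (0 < r)%N ->
  (forall j, (j < n)%N -> coker_free (upmx Q j)) ->
  coker_free (upmx (wagner_limit r n Q) m).
Proof.
move=> r_gt0 freeQ; rewrite -[upmx _ m]/(covmx _ _ (hcov _ m)).
have [lt_mn | le_nm] := ltnP m n.
  rewrite !wagner_limit_hsize_low ?(ltnW lt_mn) //.
  rewrite (eq_covmx _ _ _ (hcov Q m)) => [|j i _ _]; last exact: wagner_limit_hcov_low.
  exact: freeQ.
rewrite wagner_limit_hsizeS //.
rewrite (eq_covmx _ _ _ _ (fun j i _ _ => wagner_limit_hcov_high r n Q m j i le_nm)).
exact: coker_free_covmx_wagner.
Qed.

Lemma dpS Q m : dp Q m.+1%:Z = (hsize Q m.+1)%:Z - (hsize Q m)%:Z.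
Proof. by rewrite /dp intS addrAC subrr add0r. Qed.

Lemma psize_ge0 Q x : 0 <= psize Q x.
Proof. by case: x. Qed.

Lemma psize_lt0 Q x : x < 0 -> psize Q x = 0.
Proof. by case: x. Qed.

Lemma dp_lt0 Q x : x < 0 -> dp Q x = 0.
Proof.
move=> x_lt0; rewrite /dp !psize_lt0 ?subrr //.
by apply: lt_trans x_lt0; rewrite gtrDl.
Qed.

Lemma dp_le_psize Q x : dp Q x <= psize Q x.
Proof. by rewrite /dp gerBl psize_ge0. Qed.

Lemma prev_sizeE Q m : (prev_size Q m)%:Z = psize Q (m%:Z - 1).
Proof. by case: m => // m; rewrite intS addrAC subrr add0r. Qed.

Lemma wagner_limit_dp_low r n Q x : x <= n%:Z -> dp (wagner_limit r n Q) x = dp Q x.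
Proof.
have psize_low y : y <= n%:Z -> psize (wagner_limit r n Q) y = psize Q y.
  case: y => // m; rewrite lez_nat => le_mn.
  by rewrite -[LHS]/(hsize (wagner_limit r n Q) m)%:Z wagner_limit_hsize_low.
move=> le_xn; rewrite /dp !psize_low //.
by apply: le_trans le_xn; rewrite gerBl.
Qed.

Section RankSizeGrowth.

Variables (r n : nat) (Q : hasse).
Hypothesis hsizeS : forall m, (n <= m)%N ->
  hsize Q m.+1 = (prev_size Q m + r * hsize Q m)%N.
Hypothesis dp_low : forall m j, (1 <= m <= n)%N -> (1 <= j <= m)%N ->
  dp Q (m%:Z - j%:Z - kdelta r) <= dp Q m%:Z.

Lemma dpS_high m : (n <= m)%N ->
  dp Q m.+1%:Z = psize Q (m%:Z - 1) + (r%:Z - 1) * (hsize Q m)%:Z.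
Proof.
by move=> le_nm; rewrite dpS hsizeS // PoszD PoszM prev_sizeE mulrBl mul1r addrA.
Qed.

Lemma dp_ge0_r1 : r = 1%N -> forall x, 0 <= dp Q x.
Proof.
move=> r1 [[|m] | m]; last by rewrite dp_lt0.
  by rewrite /dp (psize_lt0 Q (0 - 1)) // subr0 psize_ge0.
have [le_mn | lt_nm] := leqP m.+1 n.
  by have := dp_low m.+1 m.+1; rewrite le_mn leqnn r1 subrr dp_lt0 //; apply.
by rewrite dpS_high // r1 subrr mul0r addr0 psize_ge0.
Qed.

Lemma psize_nondecreasing_r1 : r = 1%N -> {homo psize Q : x y / x <= y}.
Proof.
move=> r1; have hsize_mono : {homo hsize Q : i j / (i <= j)%N}.
  apply: homo_leq leqnn leq_trans _ => i.
  by have := dp_ge0_r1 r1 i.+1; rewrite dpS subr_ge0 lez_nat.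
move=> x y; case: x => [i|i]; case: y => [j|j] //=; rewrite ?lez_nat //.
exact: hsize_mono.
Qed.

Lemma dp_shift_le_r1 m j : r = 1%N -> (1 <= m)%N -> (1 <= j <= m)%N ->
  dp Q (m%:Z - j%:Z - kdelta r) <= dp Q m%:Z.
Proof.
move=> r1 m_ge1 j_bd; have [le_mn | lt_nm] := leqP m n; first by rewrite dp_low ?m_ge1.
have [t -> le_nt] : exists2 t, m = t.+1 & (n <= t)%N by exists m.-1; lia.
rewrite dpS_high // r1 subrr mul0r addr0 /kdelta eqxx.
apply: le_trans (dp_le_psize _ _) _; apply: psize_nondecreasing_r1 => //; lia.
Qed.

Lemma dp_nondecreasing_r2 :
  (2 <= r)%N -> {homo (fun m : nat => dp Q m%:Z) : i j / (i <= j)%N >-> i <= j}.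
Proof.
move=> r_ge2; apply: homo_leq lexx le_trans _ => m.
have [lt_mn | le_nm] := ltnP m n.
  have -> : m%:Z = m.+1%:Z - 1%:Z - kdelta r.
    by rewrite /kdelta gtn_eqF //= subr0 intS addrAC subrr add0r.
  by apply: dp_low; lia.
rewrite dpS_high //; apply: le_trans (dp_le_psize _ _) _.
rewrite -[psize _ _]/(hsize Q m)%:Z ler_wpDl ?psize_ge0 // ler_peMl //.
by rewrite lerBrDr lez_nat.
Qed.

Lemma dp_shift_le m j : (0 < r)%N -> (1 <= m)%N -> (1 <= j <= m)%N ->
  dp Q (m%:Z - j%:Z - kdelta r) <= dp Q m%:Z.
Proof.
move=> r_gt0 m_ge1 j_bd; have [r1 | r_ne1] := eqVneq r 1%N.
  exact: dp_shift_le_r1.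
have -> : m%:Z - j%:Z - kdelta r = (m - j)%N by rewrite /kdelta (negbTE r_ne1); lia.
by apply: dp_nondecreasing_r2; lia.
Qed.

End RankSizeGrowth.

Theorem proposition4p1 (r n : nat) (Phat : hasse) :
  (0 < r)%N -> partial_diff r n Phat ->
  let P := wagner_limit r n Phat in
  ((forall m j : nat, (1 <= m <= n)%N -> (1 <= j <= m)%N ->
      dp Phat (m%:Z - j%:Z - kdelta r) <= dp Phat m%:Z) ->
   (forall m j : nat, (1 <= m)%N -> (1 <= j <= m)%N ->
      dp P (m%:Z - j%:Z - kdelta r) <= dp P m%:Z))
  /\
  ((forall j : nat, (j < n)%N -> coker_free (upmx Phat j)) ->
   (forall m : nat, coker_free (upmx P m))).
Proof.
move=> r_gt0 _ P; split=> [dp_hat | free_hat m]; last exact: coker_free_upmx_wagner_limit.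
have kdelta_ge0 : 0 <= kdelta r by rewrite /kdelta; case: eqP.
have dp_P_low m j : (1 <= m <= n)%N -> (1 <= j <= m)%N ->
    dp P (m%:Z - j%:Z - kdelta r) <= dp P m%:Z.
  by move=> m_bd j_bd; rewrite !wagner_limit_dp_low ?dp_hat //; lia.
by move=> m j; apply: (dp_shift_le _ _ _ (wagner_limit_hsizeS r n Phat) dp_P_low).
Qed.
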